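(* The following two conditions are equivalent: (1) for each relevant pair $\langle m_1,m_2\rangle$ of a state $p\in Q^2$, $\nu(p)$ is a most general equalizer (mge) for $\langle m_1,m_2\rangle$; (2) for all states $p,q\in Q^2$ such that $\rho(p)=\langle m_1,m_2\rangle$ and $\rho(q)=\langle n_1,n_2\rangle$ are defined, and for each transition $\langle p,\langle u_1,u_2\rangle,q\rangle\in\Delta_2$, $\eta(m_1u_1,m_2u_2)$ is a mge of $\rho(q)$.
   Context: Let $\mathcal{M}=\langle M,\circ,e\rangle$ be a monoid. A tuple $\langle m_1,\dots,m_n\rangle\in M^n$ is equalizable if there is $\langle x_1,\dots,x_n\rangle\in M^n$ (an equalizer) with $m_1x_1=\dots=m_nx_n$; an equalizer $\langle x_1,\dots,x_n\rangle$ is a most general equalizer (mge) if every equalizer has the form $\langle x_1x,\dots,x_nx\rangle$ for some $x\in M$. $\mathcal{M}$ is an mge monoid if it has right cancellation ($ac=bc\Rightarrow a=b$) and every equalizable pair has an mge. Let $\eta:M^2\to M^2$ be a function that returns an mge $\eta(m,m')$ for each equalizable pair $\langle m,m'\rangle$. Let $\mathcal{T}=\langle \Sigma^*\times\mathcal{M},Q,I,F,\Delta\rangle$ be a trimmed (every state accessible and co-accessible) monoidal finite-state transducer with output in the mge monoid $\mathcal{M}$, where $\Delta\subseteq Q\times((\Sigma\cup\{\varepsilon\})\times M)\times Q$ and $\Delta^*$ is its generalized transition relation. Let $\mathcal{A}^2=\langle \mathcal{M}\times\mathcal{M},Q\times Q,I\times I,F\times F,\Delta_2\rangle$ be a squared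 output automaton for $\mathcal{T}$, i.e. $\Delta_2$ is finite and $\langle\langle p_1,p_2\rangle,\langle m,n\rangle,\langle q_1,q_2\rangle\rangle\in\Delta_2^*$ iff there is $u\in\Sigma^*$ with $\langle p_1,\langle u,m\rangle,q_1\rangle\in\Delta^*$ and $\langle p_2,\langle u,n\rangle,q_2\rangle\in\Delta^*$. For a state $\langle q_1,q_2\rangle$ lying on a successful path of $\mathcal{A}^2$, a pair $\langle m_1,m_2\rangle$ is a relevant pair for $\langle q_1,q_2\rangle$ if $\langle\langle i_1,i_2\rangle,\langle m_1,m_2\rangle,\langle q_1,q_2\rangle\rangle\in\Delta_2^*$ for some $\langle i_1,i_2\rangle\in I\times I$. Let $\langle\rho,\nu\rangle$ be a valuation of $\mathcal{A}^2$: $\rho,\nu:Q^2\to M^2$ are partial functions where $\rho(q)$ is some chosen relevant pair for $q$ if one exists (undefined otherwise), with $\rho(q)=\langle e,e\rangle$ for $q\in I^2$ having a relevant pair; and $\nu(q)=\langle e,e\rangle$ if $\rho(q)$ is defined and of the form $\langle m,m\rangle$, $\nu(q)=\eta(\rho(q))$ if $\rho(q)$ is defined and equalizable, and $\nu(q)$ undefined otherwise. *)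

From mathcomp Require Import all_boot.
From Stdlib Require List.

Set Implicit Arguments.
Unset Strict Implicit.
Unset Printing Implicit Defensive.

Section Monoids.
Variables (M : Type) (op : M -> M -> M) (e : M).

Definition is_monoid : Prop :=
  (forall a b c, op a (op b c) = op (op a b) c) /\
  (forall a, op e a = a) /\ (forall a, op a e = a).

Definition right_cancellative : Prop :=
  forall a b c, op a c = op b c -> a = b.

Definition is_equalizer (m1 m2 x1 x2 : M) : Prop := op m1 x1 = op m2 x2.

Definition equalizable (m1 m2 : M) : Prop :=
  exists x1 x2, is_equalizer m1 m2 x1 x2.

Definition is_mge (m1 m2 x1 x2 : M) : Prop :=
  is_equalizer m1 m2 x1 x2 /\
  forall y1 y2, is_equalizer m1 m2 y1 y2 ->
    exists x, y1 = op x1 x /\ y2 = op x2 x.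

Definition mge_monoid : Prop :=
  is_monoid /\ right_cancellative /\
  forall m1 m2, equalizable m1 m2 -> exists x1 x2, is_mge m1 m2 x1 x2.

Definition mge_function (eta : M * M -> M * M) : Prop :=
  forall m1 m2, equalizable m1 m2 -> is_mge m1 m2 (eta (m1, m2)).1 (eta (m1, m2)).2.

End Monoids.

(** Monoidal finite-state transducer ⟨Σ^* × M, Q, I, F, Δ⟩ with
    Δ ⊆ Q × ((Σ ∪ {ε}) × M) × Q, given as a finite list; ε is [None]. *)
Section Transducer.
Variables (M : Type) (op : M -> M -> M) (e : M).
Variables (Sigma Q : finType).
Variable Delta : list (Q * (option Sigma * M) * Q).

Definition opt_word (a : option Sigma) : seq Sigma :=
  match a with Some x => [:: x] | None => [::] end.

Inductive delta_star : Q -> seq Sigma -> M -> Q -> Prop :=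
  | ds_refl q : delta_star q [::] e q
  | ds_step p a m q w m' r :
      List.In (p, (a, m), q) Delta -> delta_star q w m' r ->
      delta_star p (opt_word a ++ w) (op m m') r.

Definition trimmed (I F : {set Q}) : Prop :=
  forall q,
    (exists i w m, i \in I /\ delta_star i w m q) /\
    (exists f w m, f \in F /\ delta_star q w m f).
End Transducer.

(** Squared output automaton ⟨M × M, Q × Q, I × I, F × F, Δ₂⟩. *)
Section Squared.
Variables (M : Type) (op : M -> M -> M) (e : M).
Variable Q : finType.
Variable Delta2 : list ((Q * Q) * (M * M) * (Q * Q)).

Inductive delta2_star : Q * Q -> M * M -> Q * Q -> Prop :=
  | d2s_refl q : delta2_star q (e, e) q
  | d2s_step p u1 u2 q n1 n2 r :
      List.In (p, (u1, u2), q) Delta2 -> delta2_star q (n1, n2) r ->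
      delta2_star p (op u1 n1, op u2 n2) r.

Variables (I F : {set Q}).

Definition init2 (q : Q * Q) : bool := (q.1 \in I) && (q.2 \in I).
Definition final2 (q : Q * Q) : bool := (q.1 \in F) && (q.2 \in F).

Definition on_successful_path (q : Q * Q) : Prop :=
  (exists i mm, init2 i /\ delta2_star i mm q) /\
  (exists f mm, final2 f /\ delta2_star q mm f).

Definition relevant_pair (q : Q * Q) (m1 m2 : M) : Prop :=
  on_successful_path q /\ exists i, init2 i /\ delta2_star i (m1, m2) q.

(** ⟨ρ,ν⟩ is a valuation of A² (partial functions as options). *)
Definition is_valuation (eta : M * M -> M * M)
    (rho nu : Q * Q -> option (M * M)) : Prop :=
  (forall q m1 m2, rho q = Some (m1, m2) -> relevant_pair q m1 m2) /\
  (forall q, rho q = None -> ~ exists m1 m2, relevant_pair q m1 m2) /\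
  (forall q, init2 q -> (exists m1 m2, relevant_pair q m1 m2) ->
     rho q = Some (e, e)) /\
  (forall q, match rho q with
             | None => nu q = None
             | Some (m1, m2) =>
                 (m1 = m2 -> nu q = Some (e, e)) /\
                 (m1 <> m2 -> equalizable op m1 m2 -> nu q = Some (eta (m1, m2))) /\
                 (~ equalizable op m1 m2 -> nu q = None)
             end).
End Squared.

From mathcomp Require Import all_boot.
From Stdlib Require List Classical_Prop.

Set Implicit Arguments.
Unset Strict Implicit.
Unset Printing Implicit Defensive.

(* Call two pairs equivalent when they have the same equalizers. A common mge
   forces equivalence, and an mge of a pair is an mge of every equivalent pair.
   Given (2), the transition p -u-> q carries the class of rho(p) to that of
   rho(q), since eta(rho(p) u) is an mge of both rho(p) u and rho(q); starting
   from rho(i) = (e, e) at initial states, induction along paths shows that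
   every relevant pair of q is equivalent to rho(q), whence (1). Conversely,
   rho(p) u is a relevant pair of q, so under (1) nu(q) is a common mge of
   rho(p) u and rho(q), and (2) follows. *)

Section Monoids.
Variables (M : Type) (op : M -> M -> M) (e : M).
Local Notation "x ⋅ y" := (op x y) (at level 40, left associativity).

Section Equalizers.
Hypothesis mulA : forall a b c, a ⋅ (b ⋅ c) = a ⋅ b ⋅ c.

Definition same_equalizers (a b c d : M) : Prop :=
  forall y1 y2, is_equalizer op a b y1 y2 <-> is_equalizer op c d y1 y2.

Lemma same_equalizers_trans a b c d f g :
  same_equalizers a b c d -> same_equalizers c d f g -> same_equalizers a b f g.
Proof. by move=> Sabcd Scdfg y1 y2; rewrite Sabcd Scdfg. Qed.

Lemma same_equalizers_mul a b c d u1 u2 :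
  same_equalizers a b c d -> same_equalizers (a ⋅ u1) (b ⋅ u2) (c ⋅ u1) (d ⋅ u2).
Proof. by move=> S y1 y2; rewrite /is_equalizer -!mulA; apply: S. Qed.

Lemma mge_equalizable a b x1 x2 : is_mge op a b x1 x2 -> equalizable op a b.
Proof. by case=> eq_x _; exists x1, x2. Qed.

Lemma mgeP a b x1 x2 y1 y2 : is_mge op a b x1 x2 ->
  is_equalizer op a b y1 y2 <-> exists x, y1 = x1 ⋅ x /\ y2 = x2 ⋅ x.
Proof.
case=> eq_x mge_x; split; first exact: mge_x.
by case=> x [-> ->]; rewrite /is_equalizer !mulA eq_x.
Qed.

Lemma mge_same_equalizers a b c d x1 x2 :
  is_mge op a b x1 x2 -> is_mge op c d x1 x2 -> same_equalizers a b c d.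
Proof. by move=> mge_ab mge_cd y1 y2; rewrite (mgeP _ _ mge_ab) (mgeP _ _ mge_cd). Qed.

Lemma same_equalizers_mge a b c d x1 x2 :
  same_equalizers a b c d -> is_mge op a b x1 x2 -> is_mge op c d x1 x2.
Proof.
move=> S [eq_x mge_x]; split; first exact/S.
by move=> y1 y2 /S; apply: mge_x.
Qed.

End Equalizers.

Section MgeMonoid.
Hypothesis mge_M : mge_monoid op e.

(* The mge (c1, c2) of (m, m) satisfies c1 d = c2 d = e for some d, so c1 = c2
   by right cancellation, and every equalizer of (m, m) is then diagonal. *)
Lemma mge_monoid_mulI m y1 y2 : m ⋅ y1 = m ⋅ y2 -> y1 = y2.
Proof.
case: mge_M => _ [mulIr has_mge] eq_y.
have [|c1 [c2 [_ mge_c]]] := has_mge m m; first by exists e, e.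
have [d [c1d c2d]] := mge_c e e erefl.
have eq_c : c1 = c2 by apply: (mulIr _ _ d); rewrite -c1d -c2d.
by have [k [-> ->]] := mge_c _ _ eq_y; rewrite eq_c.
Qed.

Lemma mge_diag m : is_mge op m m e e.
Proof.
case: mge_M => [[_ [mul1m _]] _].
split=> // y1 y2 eq_y; exists y1; rewrite mul1m; split=> //.
exact/esym/(mge_monoid_mulI eq_y).
Qed.

End MgeMonoid.

Section SquaredPaths.
Hypothesis monoid_M : is_monoid op e.
Variables (Q : finType) (Delta2 : list ((Q * Q) * (M * M) * (Q * Q))).
Local Notation star := (delta2_star op e Delta2).

Lemma delta2_star_cat s w t v r :
  star s w t -> star t v r -> star s (w.1 ⋅ v.1, w.2 ⋅ v.2) r.
Proof.
case: monoid_M => mulA [mul1m _].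
move=> st; elim: st v r => [q | p u1 u2 q n1 n2 r' pq _ IH] v r.
  by case: v => v1 v2 /=; rewrite !mul1m.
by move=> /IH /=; rewrite -!mulA; apply: d2s_step.
Qed.

Lemma delta2_star_rcons s w t u r :
  star s w t -> List.In (t, u, r) Delta2 -> star s (w.1 ⋅ u.1, w.2 ⋅ u.2) r.
Proof.
case: monoid_M => _ [_ mulm1]; case: u => u1 u2 st tr.
apply: (delta2_star_cat st); rewrite /= -(mulm1 u1) -(mulm1 u2).
by apply: d2s_step tr (d2s_refl _ _ _ _).
Qed.

Variable F : {set Q}.

Definition coaccessible2 (q : Q * Q) : Prop :=
  exists f mm, final2 F f /\ star q mm f.

Lemma coaccessible2_star q w t : star q w t -> coaccessible2 t -> coaccessible2 q.
Proof.
by move=> qt [f [mm [fin tf]]]; exists f, (w.1 ⋅ mm.1, w.2 ⋅ mm.2);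
  split; last exact: delta2_star_cat tf.
Qed.

Variable I : {set Q}.
Local Notation relevant := (relevant_pair op e Delta2 I F).

Lemma relevant_pair_step p a b u1 u2 q :
  relevant p a b -> List.In (p, (u1, u2), q) Delta2 -> coaccessible2 q ->
  relevant q (a ⋅ u1) (b ⋅ u2).
Proof.
move=> [_ [i [init_i ip]]] pq co_q.
have iq := delta2_star_rcons ip pq.
by split; [split; [exists i, (a ⋅ u1, b ⋅ u2) |] | exists i].
Qed.

Lemma relevant_pair_initial i q w :
  init2 I i -> star i w q -> coaccessible2 q -> relevant i e e.
Proof.
move=> init_i iq /(coaccessible2_star iq) co_i.
by split; [split; [exists i, (e, e); split; last exact: d2s_refl |] |
           exists i; split; last exact: d2s_refl].
Qed.

End SquaredPaths.

Section Valuation.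
Hypothesis mge_M : mge_monoid op e.
Variables (eta : M * M -> M * M) (Q : finType) (I F : {set Q}).
Variables (Delta2 : list ((Q * Q) * (M * M) * (Q * Q))).
Variables (rho nu : Q * Q -> option (M * M)).
Hypothesis eta_mge : mge_function op eta.
Hypothesis valuation : is_valuation op e Delta2 I F eta rho nu.
Local Notation relevant := (relevant_pair op e Delta2 I F).

Let monoid_M : is_monoid op e := mge_M.1.

Lemma rho_relevant_defined q a b :
  relevant q a b -> exists n1 n2, rho q = Some (n1, n2).
Proof.
case: valuation => _ [rho_None _] rel_q.
case rho_q: (rho q) => [[n1 n2]|]; first by exists n1, n2.
by case: (rho_None q rho_q); exists a, b.
Qed.

Lemma nu_mge q n1 n2 : rho q = Some (n1, n2) -> equalizable op n1 n2 ->
  exists x1 x2, nu q = Some (x1, x2) /\ is_mge op n1 n2 x1 x2.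
Proof.
case: valuation => _ [_ [_ nu_spec]] rho_q eq_n.
have := nu_spec q; rewrite rho_q => -[nu_diag [nu_eta _]].
have [eq_n12|neq_n] := Classical_Prop.classic (n1 = n2).
  by exists e, e; split; [exact: nu_diag | rewrite -eq_n12; exact: mge_diag].
exists (eta (n1, n2)).1, (eta (n1, n2)).2; split; last exact: eta_mge.
by rewrite (nu_eta neq_n eq_n); case: (eta _).
Qed.

Definition nu_mge_relevant : Prop :=
  forall p m1 m2, relevant p m1 m2 ->
    exists x1 x2, nu p = Some (x1, x2) /\ is_mge op m1 m2 x1 x2.

Definition eta_mge_transitions : Prop :=
  forall p q m1 m2 n1 n2 u1 u2,
    rho p = Some (m1, m2) -> rho q = Some (n1, n2) ->
    List.In (p, (u1, u2), q) Delta2 ->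
    equalizable op (m1 ⋅ u1) (m2 ⋅ u2) /\
    is_mge op n1 n2 (eta (m1 ⋅ u1, m2 ⋅ u2)).1 (eta (m1 ⋅ u1, m2 ⋅ u2)).2.

Lemma nu_mge_relevant_transitions : nu_mge_relevant -> eta_mge_transitions.
Proof.
case: valuation => rho_rel _ nu_rel p q m1 m2 n1 n2 u1 u2 rho_p rho_q pq.
have rel_q := rho_rel _ _ _ rho_q.
have rel_qu : relevant q (m1 ⋅ u1) (m2 ⋅ u2).
  exact: (relevant_pair_step monoid_M (rho_rel _ _ _ rho_p) pq rel_q.1.2).
have [x1 [x2 [nu_q mge_qu]]] := nu_rel _ _ _ rel_qu.
have [y1 [y2 [nu_q' mge_q]]] := nu_rel _ _ _ rel_q.
move: nu_q' mge_q; rewrite nu_q => -[<- <-] mge_q.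
have eq_u := mge_equalizable mge_qu.
split=> //; apply: same_equalizers_mge (eta_mge eq_u).
exact: (mge_same_equalizers monoid_M.1 mge_qu mge_q).
Qed.

Definition rho_represents (q : Q * Q) (a b : M) : Prop :=
  exists n1 n2, [/\ rho q = Some (n1, n2), equalizable op n1 n2
                  & same_equalizers n1 n2 a b].

Section Transitions.
Hypothesis eta_trans : eta_mge_transitions.

Lemma rho_represents_step p a b u1 u2 q :
  rho_represents p a b -> List.In (p, (u1, u2), q) Delta2 ->
  relevant q (a ⋅ u1) (b ⋅ u2) -> rho_represents q (a ⋅ u1) (b ⋅ u2).
Proof.
move=> [n1 [n2 [rho_p _ S_ab]]] pq /rho_relevant_defined [k1 [k2 rho_q]].
have [eq_nu mge_k] := eta_trans rho_p rho_q pq.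
exists k1, k2; split=> //; first exact: mge_equalizable mge_k.
apply: same_equalizers_trans (same_equalizers_mul monoid_M.1 u1 u2 S_ab).
exact: (mge_same_equalizers monoid_M.1 mge_k (eta_mge eq_nu)).
Qed.

Lemma rho_represents_star s w t a b :
  delta2_star op e Delta2 s w t -> coaccessible2 Delta2 F t ->
  relevant s a b -> rho_represents s a b -> rho_represents t (a ⋅ w.1) (b ⋅ w.2).
Proof.
case: monoid_M => mulA [_ mulm1].
move=> st; elim: st a b => [q | p u1 u2 q n1 n2 r pq qr IH] a b.
  by move=> _ _; rewrite /= !mulm1.
move=> co_r rel_p rep_p; rewrite /= !mulA.
have co_q := coaccessible2_star monoid_M qr co_r.
have rel_q := relevant_pair_step monoid_M rel_p pq co_q.
exact: IH co_r rel_q (rho_represents_step rep_p pq rel_q).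
Qed.

Lemma rho_represents_relevant q m1 m2 : relevant q m1 m2 -> rho_represents q m1 m2.
Proof.
case: monoid_M => _ [mul1m _]; case: valuation => _ [_ [rho_init _]].
move=> rel_q; have [[_ co_q] [i [init_i iq]]] := rel_q.
have rel_i := relevant_pair_initial monoid_M init_i iq co_q.
have rho_i : rho i = Some (e, e) by apply: rho_init => //; exists e, e.
have rep_i : rho_represents i e e.
  by exists e, e; split=> //; exists e, e.
by have := rho_represents_star iq co_q rel_i rep_i; rewrite /= !mul1m.
Qed.

Lemma eta_mge_transitions_relevant : nu_mge_relevant.
Proof.
move=> q m1 m2 /rho_represents_relevant [n1 [n2 [rho_q eq_n S_nm]]].
have [x1 [x2 [nu_q mge_n]]] := nu_mge rho_q eq_n.
by exists x1, x2; split; last exact: same_equalizers_mge S_nm mge_n.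
Qed.

End Transitions.

End Valuation.

End Monoids.

Theorem proposition4
  (M : Type) (op : M -> M -> M) (e : M)
  (eta : M * M -> M * M)
  (Sigma Q : finType) (I F : {set Q})
  (Delta : list (Q * (option Sigma * M) * Q))
  (Delta2 : list ((Q * Q) * (M * M) * (Q * Q)))
  (rho nu : Q * Q -> option (M * M)) :
  mge_monoid op e ->
  mge_function op eta ->
  trimmed op e Delta I F ->
  (forall p1 p2 m n q1 q2,
     delta2_star op e Delta2 (p1, p2) (m, n) (q1, q2) <->
     exists u, delta_star op e Delta p1 u m q1 /\ delta_star op e Delta p2 u n q2) ->
  is_valuation op e Delta2 I F eta rho nu ->
  ((forall p m1 m2, relevant_pair op e Delta2 I F p m1 m2 ->
      exists x1 x2, nu p = Some (x1, x2) /\ is_mge op m1 m2 x1 x2)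
   <->
   (forall p q m1 m2 n1 n2 u1 u2,
      rho p = Some (m1, m2) -> rho q = Some (n1, n2) ->
      List.In (p, (u1, u2), q) Delta2 ->
      equalizable op (op m1 u1) (op m2 u2) /\
      is_mge op n1 n2 (eta (op m1 u1, op m2 u2)).1 (eta (op m1 u1, op m2 u2)).2)).
Proof.
move=> mge_M eta_mge _ _ valuation; split.
  exact: nu_mge_relevant_transitions.
exact: eta_mge_transitions_relevant.
Qed.
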